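(* Consider the algebra of Laurent polynomials in nonzero variables $a,b,d,f,h$ with coefficients polynomial in a central parameter $G_1$, with the log-canonical Poisson bracket determined by $\{a,b\}=\{d,f\}=0,\ \{a,d\}=-\tfrac12 ad,\ \{a,f\}=\tfrac12 af,\ \{a,h\}=\tfrac12 ah,\ \{b,d\}=\tfrac14 bd,\ \{b,f\}=\tfrac14 bf,\ \{b,h\}=-\tfrac14 bh,\ \{d,h\}=\tfrac14 dh,\ \{f,h\}=\tfrac14 fh.$ Then $G_1$ and $bdh$ are Casimir elements, the symplectic leaves are $4$-dimensional, and the functions $$x_1=-bf,\qquad x_2=-G_1\frac{df}{a}-\frac{d^2}{a}-\frac{f^2}{a},\qquad x_3=-\frac{dh}{f}-\frac{ab}{f}$$ Poisson commute with $h$.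
   Context: A log-canonical bracket is extended from the generators to all Laurent polynomials by bilinearity, antisymmetry and the Leibniz rule. (These are the $\lambda$-lengths of a complete system of arcs on a Riemann sphere with two holes, one of which has three bordered cusps — the $PII^{FN}$ case.) *)

(* Laurent polynomials in a,b,d,f,h with coefficients in
   {poly R} (the polynomial variable 'X is the central parameter G1),
   modelled as finitely supported functions Z^5 -> {poly R}
   (multinomials' {malg _[_]}). *)
From HB Require Import structures.
From mathcomp Require Import all_boot all_order all_algebra.
From mathcomp Require Import finmap.
From mathcomp.multinomials Require Import monalg.
Set Implicit Arguments. Unset Strict Implicit. Unset Printing Implicit Defensive.
Import Order.TTheory GRing.Theory Num.Theory.
Local Open Scope ring_scope.

(* exponent vectors; index 0,1,2,3,4 <-> a,b,d,f,h *)
Definition expo := 'rV[int]_5.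

Section Laurent.
Variable R : numFieldType.

Definition LP := {malg {poly R}[expo]}.

Definition ev (i : 'I_5) : expo := \row_j ((j == i)%:R : int).

Definition var (i : 'I_5) : LP := << ev i >>.
Definition varinv (i : 'I_5) : LP := << - ev i >>.

Definition va := var 0. Definition vb := var 1. Definition vd := var 2.
Definition vf := var 3. Definition vh := var 4.
Definition va_inv := varinv 0. Definition vf_inv := varinv 3.

Definition G1 : LP := << 'X *g 0 >>.

Definition lmul (F H : LP) : LP :=
  \sum_(k1 <- msupp F) \sum_(k2 <- msupp H) << F@_k1 * H@_k2 *g (k1 + k2) >>.

(* coefficient of the log-canonical bracket: {x_i, x_j} = omega i j x_i x_j *)
Definition omega_up (i j : nat) : R :=
  match i, j with
  | 0, 2 => - (1/2)
  | 0, 3 => 1/2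
  | 0, 4 => 1/2
  | 1, 2 => 1/4
  | 1, 3 => 1/4
  | 1, 4 => - (1/4)
  | 2, 4 => 1/4
  | 3, 4 => 1/4
  | _, _ => 0
  end.

Definition omega (i j : 'I_5) : R :=
  if (i < j)%N then omega_up i j
  else if (j < i)%N then - omega_up j i else 0.

(* the bilinear form on exponents: {x^k1, x^k2} = form k1 k2 x^(k1+k2) *)
Definition form (k1 k2 : expo) : R :=
  \sum_(i < 5) \sum_(j < 5) (k1 0 i)%:~R * (k2 0 j)%:~R * omega i j.

(* the bracket, extended from the generators by bilinearity, antisymmetry
   and the Leibniz rule (G1 central); explicitly on Laurent monomials *)
Definition pbr (F H : LP) : LP :=
  \sum_(k1 <- msupp F) \sum_(k2 <- msupp H)
     << F@_k1 * H@_k2 * (form k1 k2)%:P *g (k1 + k2) >>.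

Definition casimir (F : LP) : Prop := forall H : LP, pbr F H = 0.

Definition lev (g : R) (p : 'rV[R]_5) (F : LP) : R :=
  \sum_(k <- msupp F) (F@_k).[g] * \prod_(i < 5) (p 0 i) ^ (k 0 i).

Definition coord (i : 'I_6) : LP :=
  match val i with 0 => G1 | n.+1 => var (inord n) end.

Definition poisson_mx (g : R) (p : 'rV[R]_5) : 'M[R]_6 :=
  \matrix_(i, j) lev g p (pbr (coord i) (coord j)).

Definition x1 : LP := - lmul vb vf.
Definition x2 : LP :=
  - lmul G1 (lmul vd (lmul vf va_inv))
  - lmul vd (lmul vd va_inv) - lmul vf (lmul vf va_inv).
Definition x3 : LP :=
  - lmul vd (lmul vh vf_inv) - lmul va (lmul vb vf_inv).

End Laurent.

(* The bracket is log-canonical, so on Laurent monomials it reads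
   {x^k, x^l} = form k l x^(k+l), with [form] the skew bilinear form of the
   coefficient matrix omega on exponent vectors.  Hence a monomial is a Casimir
   as soon as its exponent lies in the kernel of omega (G1 has exponent 0, and
   bdh has exponent e_b + e_d + e_h), and a monomial commutes with h as soon as
   its exponent is form-orthogonal to e_h, which holds for every monomial of
   x1, x2 and x3.  At a point with nonzero coordinates the Poisson matrix in
   the coordinates (G1, a, b, d, f, h) has entries omega_ij x_i x_j off the
   zero G1 row and column; its (a, b, d, f) block is invertible and the
   differentials of the Casimirs G1 and log(bdh) span a 2-dimensional kernel,
   so its rank is 4. *)
From Pilot Require Import Defs.
From HB Require Import structures.
From mathcomp Require Import all_boot all_order all_algebra.
From mathcomp Require Import finmap.
From mathcomp.multinomials Require Import monalg.
From mathcomp Require Import ring.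
Import Order.TTheory GRing.Theory Num.Theory.
Local Open Scope ring_scope.

Lemma mxrank_eq_minor_kernel (F : fieldType) n r s (M : 'M[F]_n)
    (S : 'M_(r, n)) (T : 'M_(n, r)) (K : 'M_(s, n)) (P : 'M_(n, s)) :
  S *m M *m T = 1%:M -> K *m M = 0 -> K *m P = 1%:M -> (r + s)%N = n ->
  \rank M = r.
Proof.
move=> SMT1 KM0 KP1 rsn.
have rank_ge : (r <= \rank M)%N.
  rewrite -{1}(mxrank1 F r) -SMT1.
  exact: leq_trans (mxrankM_maxl _ _) (mxrankM_maxr _ _).
have kernel_ge : (s <= \rank (kermx M))%N.
  rewrite -{1}(mxrank1 F s) -KP1.
  apply: leq_trans (mxrankM_maxl _ _) (mxrankS _).
  exact/sub_kermxP.
move: kernel_ge; rewrite mxrank_ker leq_subRL ?rank_leq_row //.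
rewrite -{3}rsn leq_add2r => rank_le.
by apply/eqP; rewrite eqn_leq rank_le rank_ge.
Qed.

Section LogCanonicalBracket.
Variable R : numFieldType.
Local Notation LP := (LP R).
Local Notation lmul := (@lmul R).
Local Notation pbr := (@pbr R).
Local Notation casimir := (@casimir R).
Local Notation form := (@Defs.form R).
Local Notation omega := (@Defs.omega R).

Lemma big_msupp_fsubset {V : zmodType} {F : LP} {A : {fset expo}}
    (Phi : {poly R} -> expo -> V) :
  (msupp F `<=` A)%fset -> (forall k, Phi 0 k = 0) ->
  \sum_(k <- msupp F) Phi F@_k k = \sum_(k <- A) Phi F@_k k.
Proof.
by move=> FA Phi0; rewrite (big_fset_incl _ FA) // => k _ /mcoeff_outdom ->.
Qed.

Lemma big2_msuppUU (c c' : {poly R}) k k'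
    (Psi : {poly R} -> {poly R} -> expo -> expo -> LP) :
  (forall y k1 k2, Psi 0 y k1 k2 = 0) -> (forall x k1 k2, Psi x 0 k1 k2 = 0) ->
  \sum_(k1 <- msupp << c *g k >>) \sum_(k2 <- msupp << c' *g k' >>)
     Psi << c *g k >>@_k1 << c' *g k' >>@_k2 k1 k2 = Psi c c' k k'.
Proof.
move=> Psi0l Psi0r.
rewrite (big_msupp_fsubset (fun x k1 => \sum_(k2 <- msupp << c' *g k' >>)
           Psi x << c' *g k' >>@_k2 k1 k2) msuppU_le); last first.
  by move=> k1; apply: big1 => *; apply: Psi0l.
rewrite big_seq_fset1 mcoeffUU.
rewrite (big_msupp_fsubset (fun y k2 => Psi c y k k2) msuppU_le) => [|k2].
  by rewrite big_seq_fset1 mcoeffUU.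
exact: Psi0r.
Qed.

Lemma lmulUU c c' k k' :
  lmul << c *g k >> << c' *g k' >> = << c * c' *g (k + k') >>.
Proof.
apply: (@big2_msuppUU c c' k k' (fun x y k1 k2 => << x * y *g (k1 + k2) >>)) => *.
  by rewrite mul0r monalgU0.
by rewrite mulr0 monalgU0.
Qed.

Lemma pbrUU c c' k k' :
  pbr << c *g k >> << c' *g k' >> = << c * c' * (form k k')%:P *g (k + k') >>.
Proof.
apply: (@big2_msuppUU c c' k k'
  (fun x y k1 k2 => << x * y * (form k1 k2)%:P *g (k1 + k2) >>)) => *.
  by rewrite !mul0r monalgU0.
by rewrite mulr0 mul0r monalgU0.
Qed.

Lemma pbrDl F1 F2 H : pbr (F1 + F2) H = pbr F1 H + pbr F2 H.
Proof.
pose Phi c k1 := \sum_(k2 <- msupp H)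
  << c * H@_k2 * (form k1 k2)%:P *g (k1 + k2) >>.
have Phi0 k : Phi 0 k = 0 by apply: big1 => *; rewrite !mul0r monalgU0.
rewrite /pbr -/(Phi _) (big_msupp_fsubset Phi (msuppD_le F1 F2) Phi0).
rewrite (big_msupp_fsubset Phi (fsubsetUl (msupp F1) (msupp F2)) Phi0).
rewrite (big_msupp_fsubset Phi (fsubsetUr (msupp F1) (msupp F2)) Phi0).
rewrite -big_split; apply: eq_bigr => k1 _; rewrite -big_split.
by apply: eq_bigr => k2 _; rewrite mcoeffD !mulrDl monalgUD.
Qed.

Lemma pbrNl F H : pbr (- F) H = - pbr F H.
Proof.
rewrite /pbr msuppN -sumrN; apply: eq_bigr => k1 _; rewrite -sumrN.
by apply: eq_bigr => k2 _; rewrite mcoeffN !mulNr monalgUN.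
Qed.

Lemma pbrBl F1 F2 H : pbr (F1 - F2) H = pbr F1 H - pbr F2 H.
Proof. by rewrite pbrDl pbrNl. Qed.

Lemma formDl k k' l : form (k + k') l = form k l + form k' l.
Proof.
rewrite /form -big_split; apply: eq_bigr => i _; rewrite -big_split.
by apply: eq_bigr => j _; rewrite mxE intrD !mulrDl.
Qed.

Lemma formNl k l : form (- k) l = - form k l.
Proof.
rewrite /form -sumrN; apply: eq_bigr => i _; rewrite -sumrN.
by apply: eq_bigr => j _; rewrite mxE intrN !mulNr.
Qed.

Lemma form0l l : form 0 l = 0.
Proof. by rewrite /form big1 // => i _; rewrite big1 // => j _; rewrite !mxE !mul0r. Qed.

Lemma form0r k : form k 0 = 0.
Proof. by rewrite /form big1 // => i _; rewrite big1 // => j _; rewrite !mxE mulr0 mul0r. Qed.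

Lemma ev_intr (i l : 'I_5) : (ev i 0 l)%:~R = (l == i)%:R :> R.
Proof. by rewrite mxE; case: eqP. Qed.

Lemma form_sum_evr k l : form k l = \sum_j (l 0 j)%:~R * form k (ev j).
Proof.
rewrite /form exchange_big; apply: eq_bigr => j _; rewrite big_distrr.
apply: eq_bigr => i _; rewrite (bigD1 j) //= big1 ?addr0 => [|m /negPf jm].
  by rewrite ev_intr eqxx mulr1 mulrCA mulrA.
by rewrite ev_intr jm mulr0 mul0r.
Qed.

Lemma form_evev i j : form (ev i) (ev j) = omega i j.
Proof.
rewrite /form (bigD1 i) //= [X in _ + X]big1 => [|m /negPf mi]; last first.
  by rewrite big1 // => l _; rewrite ev_intr mi !mul0r.
rewrite addr0 (bigD1 j) //= big1 ?addr0 => [|l /negPf lj].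
  by rewrite !ev_intr !eqxx !mul1r.
by rewrite !ev_intr lj mulr0 mul0r.
Qed.

Lemma pbrU_eq0 c c' k k' :
  form k k' = 0 -> pbr << c *g k >> << c' *g k' >> = 0.
Proof. by move=> kk'; rewrite pbrUU kk' mulr0 monalgU0. Qed.

Lemma pbrU0r F c : pbr F << c *g 0 >> = 0.
Proof.
rewrite /pbr big1 // => k1 _; rewrite big_seq big1 // => k2.
move/(fsubsetP msuppU_le); rewrite in_fset1 => /eqP ->.
by rewrite form0r mulr0 monalgU0.
Qed.

Lemma casimirU c k : (forall j, form k (ev j) = 0) -> casimir << c *g k >>.
Proof.
move=> k_ker H; rewrite /pbr big_seq big1 // => k1.
move/(fsubsetP msuppU_le); rewrite in_fset1 => /eqP ->.
apply: big1 => k2 _; rewrite form_sum_evr big1 ?mulr0 ?monalgU0 // => j _.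
by rewrite k_ker mulr0.
Qed.

Lemma casimirU0 c : casimir << c *g 0 >>.
Proof. by apply: casimirU => j; rewrite form0l. Qed.

Lemma levU g (p : 'rV[R]_5) c k :
  lev g p << c *g k >> = c.[g] * \prod_i p 0 i ^ k 0 i.
Proof.
rewrite /lev msuppU; case: eqP => [->|_]; first by rewrite big_nil horner0 mul0r.
by rewrite big_seq_fset1 mcoeffUU.
Qed.

Lemma lev0 g (p : 'rV[R]_5) : lev g p 0 = 0.
Proof. by rewrite /lev msupp0 big_nil. Qed.

Lemma prod_exprz_ev (p : 'rV[R]_5) i : \prod_l p 0 l ^ ev i 0 l = p 0 i.
Proof.
rewrite (bigD1 i) //= big1 ?mulr1 => [|l /negPf li]; rewrite mxE ?eqxx ?expr1z //.
by rewrite li expr0z.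
Qed.

Lemma lev_pbr_var g (p : 'rV[R]_5) (i j : 'I_5) : (forall l, p 0 l != 0) ->
  lev g p (pbr (var R i) (var R j)) = omega i j * p 0 i * p 0 j.
Proof.
move=> p_neq0; rewrite pbrUU form_evev levU !mul1r hornerC -mulrA.
under eq_bigr => l _ do rewrite mxE exprzDr ?unitfE ?p_neq0 //.
by rewrite big_split /= !prod_exprz_ev.
Qed.

End LogCanonicalBracket.

Section PoissonMatrixRank.
Variable R : numFieldType.
Variable p : 'rV[R]_5.
Hypothesis p_neq0 : forall i, p 0 i != 0.

Definition omega_nat (n m : nat) : R :=
  if (n < m)%N then omega_up R n m
  else if (m < n)%N then - omega_up R m n else 0.

Definition pcoord (n : nat) : R := p 0 (inord n).

Lemma pcoord_neq0 n : pcoord n != 0. Proof. exact: p_neq0. Qed.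

Definition bivector_mx : 'M[R]_6 := \matrix_(i, j)
  match val i, val j with
  | n.+1, m.+1 => omega_nat n m * pcoord n * pcoord m
  | _, _ => 0
  end.

Lemma poisson_mxE g : poisson_mx g p = bivector_mx.
Proof.
apply/matrixP => -[[|n] ltn6] [[|m] ltm6]; rewrite !mxE /=.
- by rewrite casimirU0 lev0.
- by rewrite casimirU0 lev0.
- by rewrite pbrU0r lev0.
by rewrite lev_pbr_var // /omega !inordK.
Qed.

(* Rows: the differentials of G1 and of log(bdh). *)
Definition casimir_mx : 'M[R]_(2, 6) := \matrix_(r, i)
  if val r == 0%N then (val i == 0%N)%:R
  else match val i with
       | 2 => 1 / pcoord 1 | 3 => 1 / pcoord 2 | 5 => 1 / pcoord 4 | _ => 0
       end.

Definition casimir_rinv : 'M[R]_(6, 2) := \matrix_(i, c)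
  if val c == 0%N then (val i == 0%N)%:R
  else if val i == 2%N then pcoord 1 else 0.

Definition abdf_rows : 'M[R]_(4, 6) := \matrix_(k, i) (val i == (val k).+1)%:R.

(* The inverse of the (a, b, d, f) block [[0,0,-1/2,1/2],[0,0,1/4,1/4],
   [1/2,-1/4,0,0],[-1/2,-1/4,0,0]] of omega. *)
Definition abdf_block_inv_nat (n l : nat) : R :=
  match n, l with
  | 0, 2 => 1 | 0, 3 => -1 | 1, 2 => -2 | 1, 3 => -2
  | 2, 0 => -1 | 2, 1 => 2 | 3, 0 => 1 | 3, 1 => 2 | _, _ => 0
  end.

Definition abdf_block_inv : 'M[R]_(6, 4) := \matrix_(j, l)
  match val j with
  | n.+1 => if (n < 4)%N then abdf_block_inv_nat n l / (pcoord n * pcoord l)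
            else 0
  | 0 => 0
  end.

Lemma casimir_mx_bivector : casimir_mx *m bivector_mx = 0.
Proof.
have b0 := pcoord_neq0 1; have d0 := pcoord_neq0 2; have h0 := pcoord_neq0 4.
apply/matrixP => -[[|[|//]] ?] [[|[|[|[|[|[|//]]]]]] ?];
rewrite !mxE !big_ord_recl big_ord0 !mxE /= /omega_nat /=.
all: by field; rewrite ?b0 ?d0 ?h0.
Qed.

Lemma casimir_mx_rinv : casimir_mx *m casimir_rinv = 1%:M.
Proof.
have b0 := pcoord_neq0 1; have d0 := pcoord_neq0 2; have h0 := pcoord_neq0 4.
apply/matrixP => -[[|[|//]] ?] [[|[|//]] ?];
rewrite !mxE !big_ord_recl big_ord0 !mxE /=.
all: by field; rewrite ?b0 ?d0 ?h0.
Qed.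

Lemma abdf_minor_inv : abdf_rows *m bivector_mx *m abdf_block_inv = 1%:M.
Proof.
have a0 := pcoord_neq0 0; have b0 := pcoord_neq0 1.
have d0 := pcoord_neq0 2; have f0 := pcoord_neq0 3.
apply/matrixP => -[[|[|[|[|//]]]] ?] [[|[|[|[|//]]]] ?];
rewrite !mxE !big_ord_recl big_ord0 !mxE !big_ord_recl !big_ord0 !mxE /=.
all: by rewrite /omega_nat /abdf_block_inv_nat /=; field; rewrite ?a0 ?b0 ?d0 ?f0.
Qed.

Lemma rank_bivector_mx : \rank bivector_mx = 4%N.
Proof.
exact: mxrank_eq_minor_kernel abdf_minor_inv casimir_mx_bivector
  casimir_mx_rinv _.
Qed.

End PoissonMatrixRank.

Theorem mainTheorem9 (R : numFieldType) :
  [/\ casimir (G1 R),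
      casimir (lmul (vb R) (lmul (vd R) (vh R))),
      (forall (g : R) (p : 'rV[R]_5), (forall i, p 0 i != 0) ->
          \rank (poisson_mx g p) = 4%N)
    & [/\ pbr (x1 R) (vh R) = 0, pbr (x2 R) (vh R) = 0
        & pbr (x3 R) (vh R) = 0]].
Proof.
split.
- exact: casimirU0.
- rewrite /vb /vd /vh /var !lmulUU; apply: casimirU => -[[|[|[|[|[|//]]]]] ?];
  by rewrite !formDl !form_evev /omega /=; field.
- move=> g p p_neq0.
  by rewrite (@poisson_mxE _ _ p_neq0) (@rank_bivector_mx _ _ p_neq0).
split.
- rewrite /x1 /vb /vf /vh /var lmulUU pbrNl pbrU_eq0 ?oppr0 //.
  by rewrite formDl !form_evev /omega /=; field.
- rewrite /x2 /G1 /vd /vf /va_inv /varinv /vh /var !lmulUU !pbrBl !pbrNl.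
  rewrite !pbrU_eq0 ?subr0 ?oppr0 // !formDl ?formNl !form_evev ?form0l;
  by rewrite /omega /=; field.
- rewrite /x3 /va /vb /vd /vf_inv /varinv /vh /var !lmulUU !pbrBl !pbrNl.
  rewrite !pbrU_eq0 ?subr0 ?oppr0 // !formDl ?formNl !form_evev ?form0l;
  by rewrite /omega /=; field.
Qed.
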